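(* For integers $i\ge0$, $j\ge0$ and real $k$: (a) $b_{i,j+1,k}=\sum_{r=0}^{i-1}\binom{i}{r}b_{r,j,k}$; (b) $b_{i,j,k+1}=\sum_{r=0}^{i}\binom{i}{r}b_{r,j,k}$; (c) $b_{i+1,j+1,k}=(j+1)\sum_{r=0}^{i}\binom{i}{r}b_{r,j,k}+k\,b_{i,j+1,k}$; (d) $b_{i+1,j+1,k}=(j+1)\sum_{r=j}^{i}b_{r,j,k}\,(j+k+1)^{i-r}$; (e) $b_{i+1,j+1,k}=(j+1)\sum_{r=j}^{i}b_{r,j,k+1}\,k^{i-r}$.
   Context: For integers $i\ge0$, $j\ge0$ and real $k$, $b_{i,j,k}=\sum_{r=0}^{j}\binom{j}{r}(-1)^{j-r}(r+k)^i$, with the convention $0^0=1$ (used throughout, also in the powers appearing in (d) and (e)). *)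

From mathcomp Require Import all_boot all_order all_algebra.
From mathcomp Require Import reals.
Set Implicit Arguments. Unset Strict Implicit. Unset Printing Implicit Defensive.
Import Order.TTheory GRing.Theory Num.Theory.
Local Open Scope ring_scope.

(* b_{i,j,k} = sum_{r=0}^{j} C(j,r) (-1)^(j-r) (r+k)^i.
   The convention 0^0 = 1 is built in: x ^+ 0 = 1 for every x. *)
Definition b (R : realType) (i j : nat) (k : R) : R :=
  \sum_(0 <= r < j.+1) ('C(j, r))%:R * (-1) ^+ (j - r) * (r%:R + k) ^+ i.

From mathcomp Require Import all_boot all_order all_algebra.
From mathcomp Require Import reals ring.
Set Implicit Arguments. Unset Strict Implicit. Unset Printing Implicit Defensive.
Import Order.TTheory GRing.Theory Num.Theory.
Local Open Scope ring_scope.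

(* b_{i,j,k} is the j-th forward difference at 0 of r |-> (r + k)^i.  Pascal's
   rule gives Delta^(j+1) = Delta^j o Delta, i.e. b_{i,j+1,k} = b_{i,j,k+1} - b_{i,j,k},
   and the binomial theorem expands b_{i,j,k+1}; together they give (a) and (b).
   The identity r C(j+1,r) = (j+1) C(j,r-1) applied to (r + k)^(i+1) = r (r + k)^i + k (r + k)^i
   gives (c).  Reading (c) as a first-order linear recurrence in i for b_{i,j+1,k}
   (starting from b_{0,j+1,k} = 0) and unrolling it gives (e), and also (d) once
   b_{i,j,k+1} is eliminated with the difference relation; the terms with r < j
   drop out because b_{r,j,k} = 0 for r < j. *)

Section ForwardDifference.
Variable R : comPzRingType.
Implicit Types (f g : nat -> R) (a : R).

Definition forward_diff j f : R :=
  \sum_(0 <= r < j.+1) ('C(j, r))%:R * (-1) ^+ (j - r) * f r.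

Lemma forward_diffD j f g :
  forward_diff j (fun r => f r + g r) = forward_diff j f + forward_diff j g.
Proof. by rewrite -big_split; apply: eq_bigr => r _; rewrite mulrDr. Qed.

Lemma forward_diffB j f g :
  forward_diff j (fun r => f r - g r) = forward_diff j f - forward_diff j g.
Proof. by rewrite -sumrB; apply: eq_bigr => r _; rewrite mulrBr. Qed.

Lemma forward_diffZ j a f :
  forward_diff j (fun r => a * f r) = a * forward_diff j f.
Proof. by rewrite mulr_sumr; apply: eq_bigr => r _; rewrite mulrCA. Qed.

Lemma forward_diffS j f :
  forward_diff j.+1 f = forward_diff j (fun r => f r.+1 - f r).
Proof.
rewrite forward_diffB /forward_diff big_nat_recl // bin0 subn0 mul1r.
under eq_big_nat => r _ do rewrite binS natrD !mulrDl subSS.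
rewrite big_split /= [X in _ + X]addrC addrCA; congr (_ + _).
rewrite [in RHS]big_nat_recl // bin0 subn0 mul1r opprD exprS mulN1r mulNr.
congr (_ + _); rewrite big_nat_recr //= bin_small // !mul0r addr0 -sumrN.
apply: eq_big_nat => r /andP[_ ltrj].
by rewrite -(subnSK ltrj) exprS mulN1r mulrN mulNr.
Qed.

Lemma forward_diffS_mul_index j f :
  forward_diff j.+1 (fun r => r%:R * f r) =
  j.+1%:R * forward_diff j (fun r => f r.+1).
Proof.
rewrite /forward_diff big_nat_recl // mul0r mulr0 add0r mulr_sumr.
apply: eq_big_nat => r _; rewrite subSS.
have binE : r.+1%:R * ('C(j.+1, r.+1))%:R = j.+1%:R * ('C(j, r))%:R :> R.
  by rewrite -!natrM -mul_bin_diag.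
transitivity (r.+1%:R * ('C(j.+1, r.+1))%:R * ((-1) ^+ (j - r) * f r.+1)).
  by ring.
by rewrite binE; ring.
Qed.

End ForwardDifference.

Lemma recurrence_unfold (R : comPzRingType) (f B : nat -> R) (c a : R) n :
  B 0%N = 0 -> (forall m, B m.+1 = c * f m + a * B m) ->
  B n.+1 = c * \sum_(0 <= r < n.+1) f r * a ^+ (n - r).
Proof.
move=> B0 BS; elim: n => [|n IHn].
  by rewrite BS B0 big_nat1 subnn expr0 mulr1 mulr0 addr0.
rewrite BS IHn [in RHS]big_nat_recr //= subnn expr0 mulr1 mulrDr addrC.
congr (_ + _); rewrite mulrCA mulr_sumr; congr (_ * _).
apply: eq_big_nat => r /andP[_ ltrn].
by rewrite subSn // exprS mulrCA.
Qed.

Lemma big_nat_drop_vanishing_prefix (V : nmodType) (F : nat -> V) j n :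
  (forall r, (r < j)%N -> F r = 0) ->
  \sum_(0 <= r < n) F r = \sum_(j <= r < n) F r.
Proof.
move=> F0; rewrite [RHS](big_nat_widenl _ 0) // big_mkcond /=.
by apply: eq_bigr => r _; case: leqP => // /F0.
Qed.

Section BinomialDifferences.
Variable R : realType.
Implicit Types k : R.

Lemma b_forward_diff i j k : b i j k = forward_diff j (fun r => (r%:R + k) ^+ i).
Proof. by []. Qed.

Lemma b_diff i j k : b i j.+1 k = b i j (k + 1) - b i j k.
Proof.
rewrite !b_forward_diff forward_diffS forward_diffB; congr (_ - _).
by apply: eq_bigr => r _; rewrite -addn1 natrD addrAC addrA.
Qed.

Lemma b_shift i j k : b i j (k + 1) = \sum_(0 <= r < i.+1) ('C(i, r))%:R * b r j k.
Proof.
rewrite /b !big_mkord.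
under eq_bigr => r _ do rewrite addrA exprD1n mulr_sumr.
rewrite /= exchange_big; apply: eq_bigr => t _.
rewrite big_mkord mulr_sumr; apply: eq_bigr => r _.
by rewrite -mulr_natl; ring.
Qed.

Lemma bS_binomial i j k : b i j.+1 k = \sum_(0 <= r < i) ('C(i, r))%:R * b r j k.
Proof. by rewrite b_diff b_shift big_nat_recr //= binn mul1r addrK. Qed.

Lemma bSS i j k : b i.+1 j.+1 k = j.+1%:R * b i j (k + 1) + k * b i j.+1 k.
Proof.
rewrite !b_forward_diff.
have -> : forward_diff j.+1 (fun r => (r%:R + k) ^+ i.+1) =
    forward_diff j.+1 (fun r => r%:R * (r%:R + k) ^+ i + k * (r%:R + k) ^+ i).
  by apply: eq_bigr => r _; rewrite exprS mulrDl.
rewrite forward_diffD forward_diffZ forward_diffS_mul_index; congr (_ * _ + _).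
by apply: eq_bigr => r _; rewrite -addn1 natrD addrAC addrA.
Qed.

Lemma b_eq0 r j k : (r < j)%N -> b r j k = 0.
Proof.
elim: j r k => [|j IHj] r k // ltrj; rewrite bS_binomial big1_seq // => s.
by rewrite mem_index_iota => /andP[_ /andP[_ ltsr]]; rewrite IHj ?mulr0 ?(leq_trans ltsr).
Qed.

End BinomialDifferences.

Theorem mainTheorem7 (R : realType) (i j : nat) (k : R) :
  [/\ b i j.+1 k = \sum_(0 <= r < i) ('C(i, r))%:R * b r j k
        :> R,
      b i j (k + 1) = \sum_(0 <= r < i.+1) ('C(i, r))%:R * b r j k,
      b i.+1 j.+1 k = (j.+1)%:R * (\sum_(0 <= r < i.+1) ('C(i, r))%:R * b r j k)
                      + k * b i j.+1 k,
      b i.+1 j.+1 k = (j.+1)%:R *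
                      (\sum_(j <= r < i.+1) b r j k * ((j.+1)%:R + k) ^+ (i - r))
    & b i.+1 j.+1 k = (j.+1)%:R *
                      (\sum_(j <= r < i.+1) b r j (k + 1) * k ^+ (i - r))].
Proof.
have b0S : b 0 j.+1 k = 0 by rewrite b_eq0.
have drop_small k' (F : nat -> R) : \sum_(0 <= r < i.+1) b r j k' * F r =
    \sum_(j <= r < i.+1) b r j k' * F r.
  by apply: big_nat_drop_vanishing_prefix => r /b_eq0 ->; rewrite mul0r.
split; [exact: bS_binomial | exact: b_shift | by rewrite bSS b_shift | |].
- rewrite -drop_small; apply: (recurrence_unfold (B := fun n => b n j.+1 k)) => // n.
  by rewrite bSS b_diff; ring.
- rewrite -drop_small; apply: (recurrence_unfold (B := fun n => b n j.+1 k)) => // n.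
  exact: bSS.
Qed.
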